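(* Let $F$ be a hypergraph with $i(F)=\{I_1,\dots,I_k\}$. Let $H,H_1,H_2$ be hypergraphs with $H=H_1\cup H_2$, and let $S$ be a set with $V(H_1)\cap V(H_2)\subseteq S$ and $S\subseteq V(H_1)\cap V(H_2)$. Let $A_1,\dots,A_k\in tr_S(i(H))$ be such that $\{\bigcap_{i:x\in I_i}A_i\}_{x\in V(F)}$ covers $S$. Then the following are equivalent: (1) $f_H^S(A_1,\dots,A_k)=1$; (2) there exist $A_i^j\in tr_S(i(H_j))$ for $i\in[k]$, $j\in[2]$, with $A_i\subseteq A_i^1\cap A_i^2$ for all $i$, and $f_{H_j}^S(A_1^j,\dots,A_k^j)=1$ for $j=1,2$.
   Context: A hypergraph $H$ has a finite vertex set $V(H)$ and a set $E(H)$ of subsets of $V(H)$. A set of vertices is independent if it contains no edge; $i(H)$ is the family of inclusion-wise maximal independent sets. $H=H_1\cup H_2$ means $V(H)=V(H_1)\cup V(H_2)$ and $E(H)=E(H_1)\cup E(H_2)$. $tr_S(\mathcal{F})=\{X\cap S:X\in\mathcal{F}\}$. A family of sets covers a set $Y$ if its union contains $Y$. An intersection over an empty family is taken to be the whole ambient vertex set. For a hypergraph $H$ and $S\subseteq V(H)$, $f_H^S(A_1,\dots,A_k)=1$ iff: (a) there exist $J_1,\dots,J_k\in i(H)$ such that $\{\bigcap_{i:x\in I_i}J_i\}_{x\in V(F)}$ covers $V(H)$; (b) $\{\bigcap_{i:x\in I_i}A_i\}_{x\in V(F)}$ covers $S$; and (c) $A_i\subseteq J_i$ for all $i$ (with the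 same $J_i$ as in (a)); otherwise $f_H^S(A_1,\dots,A_k)=0$. *)

From mathcomp Require Import all_boot.
Set Implicit Arguments. Unset Strict Implicit. Unset Printing Implicit Defensive.

Record hypergraph (T : finType) := Hypergraph {
  hV : {set T};
  hE : {set {set T}} }.

Definition wf_hypergraph (T : finType) (H : hypergraph T) : Prop :=
  forall e, e \in hE H -> e \subset hV H.

Definition hunion (T : finType) (H1 H2 : hypergraph T) : hypergraph T :=
  Hypergraph (hV H1 :|: hV H2) (hE H1 :|: hE H2).

Definition independent (T : finType) (H : hypergraph T) (X : {set T}) : bool :=
  (X \subset hV H) && [forall e in hE H, ~~ (e \subset X)].

Definition iH (T : finType) (H : hypergraph T) : {set {set T}} :=
  [set X | maxset (independent H) X].

Definition tr (T : finType) (S : {set T}) (F : {set {set T}}) : {set {set T}} :=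
  [set X :&: S | X in F].

(* Intersection of the A_i over i with x \in I_i; empty intersection = Amb. *)
Definition capfam (T U : finType) (k : nat) (Amb : {set T})
  (I : 'I_k -> {set U}) (A : 'I_k -> {set T}) (x : U) : {set T} :=
  Amb :&: \bigcap_(i | x \in I i) A i.

Definition covers (T U : finType) (VF : {set U}) (fam : U -> {set T}) (Y : {set T}) : Prop :=
  Y \subset \bigcup_(x in VF) fam x.

(* f_H^S(A_1,...,A_k), relative to F with i(F) = {I_1,...,I_k}. *)
Definition fHS (T U : finType) (k : nat) (F : hypergraph U) (I : 'I_k -> {set U})
  (H : hypergraph T) (S : {set T}) (A : 'I_k -> {set T}) : Prop :=
  exists J : 'I_k -> {set T},
    [/\ forall i, J i \in iH H,
        covers (hV F) (capfam (hV H) I J) (hV H),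
        covers (hV F) (capfam (hV H) I A) S &
        forall i, A i \subset J i].

(** The equivalence is a gluing argument along the separator [S].
    Restricting a maximal independent set [J] of [H1 ∪ H2] to [V(Hj)] gives an
    independent set of [Hj], which extends to a maximal one; since [S] lies in
    both vertex sets, the traces on [S] only grow, so the covering conditions
    survive.  Conversely, from maximal independent sets [J1] of [H1] and [J2]
    of [H2] containing [A], the set [(J1 \ S) ∪ (J2 \ S) ∪ A] is independent
    in [H1 ∪ H2]: an edge of [H1] lies in [V(H1)], which meets [J2 \ S] only
    inside [V(H1) ∩ V(H2) ⊆ S], so the edge would lie in [J1].  Any maximal
    extension then covers [S] through [A] and [V(Hj) \ S] through [Jj]. *)

From mathcomp Require Import all_boot.

Set Implicit Arguments.
Unset Strict Implicit.
Unset Printing Implicit Defensive.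

Section Hypergraphs.

Variable T : finType.
Implicit Types (H : hypergraph T) (S X Y Amb : {set T}).

Lemma iH_independent H X : X \in iH H -> independent H X.
Proof. by rewrite inE => /maxsetp. Qed.

Lemma independent_subV H X : independent H X -> X \subset hV H.
Proof. by case/andP. Qed.

Lemma independent_sub_iH H X : independent H X -> exists2 J, J \in iH H & X \subset J.
Proof. by case/maxset_exists => J J_max XJ; exists J; rewrite ?inE. Qed.

Lemma tr_subset S (F : {set {set T}}) X : X \in tr S F -> X \subset S.
Proof. by case/imsetP => Y _ ->; apply: subsetIr. Qed.

Lemma independent_restrict H H' X :
  hE H' \subset hE H -> independent H X -> independent H' (X :&: hV H').
Proof.
move=> sE /andP [_ /forallP indX]; rewrite /independent subsetIr /=.
apply/forallP => e; apply/implyP => eE'.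
move: (indX e); rewrite (subsetP sE _ eE') /=.
by apply: contra => /subset_trans; apply; apply: subsetIl.
Qed.

Lemma edge_sub_glue H1 V2 S X1 X2 (A e : {set T}) :
  wf_hypergraph H1 -> hV H1 :&: V2 \subset S -> X2 \subset V2 -> A \subset X1 ->
  e \in hE H1 -> e \subset (X1 :\: S) :|: (X2 :\: S) :|: A -> e \subset X1.
Proof.
move=> wf1 sV12S sX2V2 sAX1 eE /subsetP sub; apply/subsetP => y ye.
have yV1 := subsetP (wf1 _ eE) _ ye.
move: (sub _ ye); rewrite !inE => /orP [/orP [/andP [] // | /andP [yNS yX2]] | yA].
- by move: yNS; rewrite (subsetP sV12S) // inE yV1 (subsetP sX2V2).
- exact: (subsetP sAX1).
Qed.

Lemma independent_glue H1 H2 S X1 X2 (A : {set T}) :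
  wf_hypergraph H1 -> wf_hypergraph H2 -> hV H1 :&: hV H2 \subset S ->
  independent H1 X1 -> independent H2 X2 -> A \subset X1 -> A \subset X2 ->
  independent (hunion H1 H2) ((X1 :\: S) :|: (X2 :\: S) :|: A).
Proof.
move=> wf1 wf2 sV12S ind1 ind2 sAX1 sAX2.
have sX1V1 := independent_subV ind1; have sX2V2 := independent_subV ind2.
apply/andP; split.
  rewrite /= !subUset !(subset_trans (subsetDl _ _)) //=.
  - exact: subset_trans sAX1 (subset_trans sX1V1 (subsetUl _ _)).
  - exact: subset_trans sX2V2 (subsetUr _ _).
  - exact: subset_trans sX1V1 (subsetUl _ _).
apply/forallP => e; apply/implyP; rewrite inE => /orP [eE | eE].
- case/andP: ind1 => _ /forallP /(_ e); rewrite eE /=; apply: contra.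
  exact: edge_sub_glue wf1 sV12S sX2V2 sAX1 eE.
- case/andP: ind2 => _ /forallP /(_ e); rewrite eE /=; apply: contra.
  rewrite (setUC (X1 :\: S)); apply: edge_sub_glue wf2 _ sX1V1 sAX2 eE.
  by rewrite setIC.
Qed.

Variables (U : finType) (k : nat) (F : hypergraph U) (I : 'I_k -> {set U}).
Implicit Types (A B : 'I_k -> {set T}).

Lemma covers_capfam Amb Amb' B B' Y :
  (forall i, Y :&: B i \subset B' i) -> Y \subset Amb' ->
  covers (hV F) (capfam Amb I B) Y -> covers (hV F) (capfam Amb' I B') Y.
Proof.
move=> sBB' sYAmb /subsetP covY; apply/subsetP => v vY.
have /bigcupP [x xF] := covY v vY; rewrite /capfam inE => /andP [_ /bigcapP vB].
apply/bigcupP; exists x => //; rewrite /capfam inE (subsetP sYAmb) //=.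
by apply/bigcapP => i xi; apply: (subsetP (sBB' i)); rewrite inE vY vB.
Qed.

Lemma fHS_restrict H Hj S A :
  hE Hj \subset hE H -> hV Hj \subset hV H -> S \subset hV Hj ->
  (forall i, A i \subset S) -> fHS F I H S A ->
  exists Aj, [/\ forall i, Aj i \in tr S (iH Hj), forall i, A i \subset Aj i
               & fHS F I Hj S Aj].
Proof.
move=> sE sV sSVj sAS [J [J_max covJ covA sAJ]].
have indJj i : independent Hj (J i :&: hV Hj).
  exact: independent_restrict sE (iH_independent (J_max i)).
have /all_sig2 [Jj Jj_max sJJj] := fun i => sig2_eqW (independent_sub_iH (indJj i)).
have sAJj i : A i \subset Jj i.
  by apply: subset_trans (sJJj i); rewrite subsetI sAJ (subset_trans (sAS i)).
exists (fun i => Jj i :&: S); split=> [i | i | ].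
- exact: imset_f.
- by rewrite subsetI sAJj sAS.
exists Jj; split=> // [| | i]; last exact: subsetIl.
- apply: covers_capfam (subset_trans sV covJ) => // i.
  by apply: subset_trans (sJJj i); rewrite setIC.
- apply: covers_capfam covA => // i.
  by rewrite subsetI subsetIl (subset_trans (subsetIr _ _) (sAJj i)).
Qed.

Lemma fHS_glue H1 H2 S A A1 A2 :
  wf_hypergraph H1 -> wf_hypergraph H2 -> hV H1 :&: hV H2 \subset S ->
  S \subset hV (hunion H1 H2) -> covers (hV F) (capfam (hV (hunion H1 H2)) I A) S ->
  (forall i, A i \subset A1 i :&: A2 i) -> fHS F I H1 S A1 -> fHS F I H2 S A2 ->
  fHS F I (hunion H1 H2) S A.
Proof.
move=> wf1 wf2 sV12S sSV covA sAA12.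
move=> [J1 [J1_max covJ1 _ sA1J1]] [J2 [J2_max covJ2 _ sA2J2]].
have sAJ1 i : A i \subset J1 i.
  by rewrite (subset_trans (sAA12 i)) // (subset_trans _ (sA1J1 i)) ?subsetIl.
have sAJ2 i : A i \subset J2 i.
  by rewrite (subset_trans (sAA12 i)) // (subset_trans _ (sA2J2 i)) ?subsetIr.
pose J0 i := (J1 i :\: S) :|: (J2 i :\: S) :|: A i.
have indJ0 i : independent (hunion H1 H2) (J0 i).
  exact: independent_glue wf1 wf2 sV12S (iH_independent (J1_max i))
    (iH_independent (J2_max i)) (sAJ1 i) (sAJ2 i).
have /all_sig2 [J J_max sJ0J] := fun i => sig2_eqW (independent_sub_iH (indJ0 i)).
have cov_side (Vj : {set T}) (Jj : 'I_k -> {set T}) :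
    Vj \subset hV (hunion H1 H2) -> (forall i, Jj i :\: S \subset J0 i) ->
    covers (hV F) (capfam Vj I Jj) Vj ->
    covers (hV F) (capfam (hV (hunion H1 H2)) I J) (Vj :\: S).
  move=> sVj sJjJ0 covJj.
  apply: covers_capfam (subset_trans (subsetDl _ _) covJj) => [i |].
  - apply: subset_trans (subset_trans (sJjJ0 i) (sJ0J i)).
    by apply/subsetP => v; rewrite !inE => /andP [/andP [-> _] ->].
  - exact: subset_trans (subsetDl _ _) sVj.
exists J; split=> // [| i]; last exact: subset_trans (subsetUr _ _) (sJ0J i).
have sVH : hV (hunion H1 H2) \subset S :|: (hV H1 :\: S) :|: (hV H2 :\: S).
  by apply/subsetP => v; rewrite !inE; case: (v \in S).
apply: subset_trans sVH _; rewrite !subUset -andbA; apply/and3P; split.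
- apply: covers_capfam covA => // i.
  by rewrite (subset_trans (subsetIr _ _)) // (subset_trans _ (sJ0J i)) ?subsetUr.
- apply: cov_side covJ1 => [| i]; first exact: subsetUl.
  exact: subset_trans (subsetUl _ _) (subsetUl _ _).
- apply: cov_side covJ2 => [| i]; first exact: subsetUr.
  exact: subset_trans (subsetUr _ _) (subsetUl _ _).
Qed.

End Hypergraphs.

Theorem mainTheorem13 (T U : finType) (k : nat) (F : hypergraph U)
  (I : 'I_k -> {set U}) (H1 H2 : hypergraph T) (S : {set T})
  (A : 'I_k -> {set T}) :
  wf_hypergraph F -> wf_hypergraph H1 -> wf_hypergraph H2 ->
  injective I -> [set I i | i : 'I_k] = iH F ->
  hV H1 :&: hV H2 \subset S -> S \subset hV H1 :&: hV H2 ->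
  (forall i, A i \in tr S (iH (hunion H1 H2))) ->
  covers (hV F) (capfam (hV (hunion H1 H2)) I A) S ->
  (fHS F I (hunion H1 H2) S A <->
   exists A1 A2 : 'I_k -> {set T},
     [/\ forall i, A1 i \in tr S (iH H1),
         forall i, A2 i \in tr S (iH H2),
         forall i, A i \subset A1 i :&: A2 i,
         fHS F I H1 S A1 &
         fHS F I H2 S A2]).
Proof.
(* That [I] enumerates [i(F)] plays no role: only the index sets [I i] matter. *)
move=> _ wf1 wf2 _ _ sV12S sSV12 A_tr covA.
have sAS i : A i \subset S := tr_subset (A_tr i).
have sSV1 : S \subset hV H1 := subset_trans sSV12 (subsetIl _ _).
have sSV2 : S \subset hV H2 := subset_trans sSV12 (subsetIr _ _).
split=> [fA | [A1 [A2 [_ _ sAA12 fA1 fA2]]]].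
- have [A1 [A1_tr sAA1 fA1]] :=
    fHS_restrict (H := hunion H1 H2) (subsetUl _ _) (subsetUl _ _) sSV1 sAS fA.
  have [A2 [A2_tr sAA2 fA2]] :=
    fHS_restrict (H := hunion H1 H2) (subsetUr _ _) (subsetUr _ _) sSV2 sAS fA.
  by exists A1, A2; split=> // i; rewrite subsetI sAA1 sAA2.
- apply: fHS_glue wf1 wf2 sV12S _ covA sAA12 fA1 fA2.
  exact: subset_trans sSV1 (subsetUl _ _).
Qed.
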